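(* Let $m\in\mathbb N$. For all $\varepsilon_1,\dots,\varepsilon_m\in\{\pm1\}$ and $i_1,\dots,i_m\in\mathbb N$, $$\varepsilon_1\eta^{i_1}+\dots+\varepsilon_m\eta^{i_m}=0\quad\text{implies}\quad \varepsilon_1a_{i_1}+\dots+\varepsilon_ma_{i_m}=0.$$
   Context: Standing setting: $d\in\mathbb N$; $\lambda_1,\dots,\lambda_d\in\mathbb C$ are the roots of an irreducible polynomial of degree $d$ with integer coefficients; $c_1,\dots,c_d\in\mathbb C$; the dominant root condition holds: $\lambda_1$ is real, $\lambda_1>1$, $\lambda_1>\max\{|\lambda_2|,\dots,|\lambda_d|\}$, $c_1\ne0$; $a_n=c_1\lambda_1^n+\dots+c_d\lambda_d^n$ is a positive integer for every $n\in\mathbb N$; and $\eta:=\lambda_1$. *)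

From HB Require Import structures.
From mathcomp Require Import all_boot all_order all_algebra.
From mathcomp Require Import reals complex.
Set Implicit Arguments. Unset Strict Implicit. Unset Printing Implicit Defensive.
Import Order.TTheory GRing.Theory Num.Theory.
Local Open Scope ring_scope.

(* The linear recurrence sequence a_n = c_1 lam_1^n + ... + c_d lam_d^n,
   with 0-based indices: lam 0 = lambda_1, ..., lam (d-1) = lambda_d. *)
Definition lrs (R : realType) (d : nat) (c lam : nat -> R[i]) (n : nat) : R[i] :=
  \sum_(j < d) c j * lam j ^+ n.

From HB Require Import structures.
From mathcomp Require Import all_boot all_order all_algebra.
From mathcomp Require Import reals complex.
Set Implicit Arguments. Unset Strict Implicit. Unset Printing Implicit Defensive.
Import Order.TTheory GRing.Theory Num.Theory.
Local Open Scope ring_scope.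

(* Q(X) := eps_1 X^(i_1) + ... + eps_m X^(i_m) is an integer polynomial
   vanishing at eta = lambda_1.  As p is irreducible over Q and also vanishes
   at eta, p divides Q, so Q vanishes at every conjugate lambda_j.  Exchanging
   the two sums, eps_1 a_(i_1) + ... + eps_m a_(i_m) = sum_j c_j Q(lambda_j) = 0. *)

Definition sparse_poly (R : nzRingType) (m : nat) (a : 'I_m -> R) (e : 'I_m -> nat)
  : {poly R} := \sum_(k < m) a k *: 'X^(e k).

Lemma horner_map_sparse_poly (R : nzRingType) (S : comNzRingType)
    (f : {rmorphism R -> S}) (m : nat) (a : 'I_m -> R) (e : 'I_m -> nat) (x : S) :
  (map_poly f (sparse_poly a e)).[x] = \sum_(k < m) f (a k) * x ^+ e k.
Proof.
rewrite /sparse_poly rmorph_sum horner_sum; apply: eq_bigr => k _.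
by rewrite -mul_polyC rmorphM /= map_polyC map_polyXn hornerCM hornerXn.
Qed.

Lemma root_scale_prod_XsubC (R : comNzRingType) (d : nat) (a : R) (r : nat -> R)
    (j : 'I_d) :
  root (a *: \prod_(i < d) ('X - (r i)%:P)) (r j).
Proof.
apply/rootP; rewrite hornerZ horner_prod (bigD1 j) //=.
by rewrite hornerXsubC subrr mul0r mulr0.
Qed.

Lemma map_poly_rmorph_intr (R : nzRingType) (f : {rmorphism rat -> R})
    (q : {poly int}) :
  map_poly f (map_poly (intr : int -> rat) q) = map_poly intr q.
Proof.
by rewrite -map_poly_comp; apply: eq_map_poly => z /=; rewrite rmorph_int.
Qed.

Lemma irredp_dvdp_common_root (F L : fieldType) (f : {rmorphism F -> L})
    (p q : {poly F}) (x : L) :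
  irreducible_poly p -> root (map_poly f p) x -> root (map_poly f q) x -> p %| q.
Proof.
move=> irr_p px qx; rewrite -[p %| q]negbK -irreducible_poly_coprime //.
apply: contraL qx => cop_pq; apply: coprimep_root px.
by rewrite coprimep_map.
Qed.

Lemma sum_lrs_exchange (R : realType) (d m : nat) (c lam : nat -> R[i])
    (a : 'I_m -> R[i]) (e : 'I_m -> nat) :
  \sum_(k < m) a k * lrs d c lam (e k)
  = \sum_(j < d) c j * \sum_(k < m) a k * lam j ^+ e k.
Proof.
rewrite /lrs; under eq_bigr => k _ do rewrite mulr_sumr.
rewrite exchange_big; apply: eq_bigr => j _; rewrite mulr_sumr.
by apply: eq_bigr => k _; rewrite mulrCA.
Qed.

Theorem lemma6p2 (R : realType) (d : nat) (lam c : nat -> R[i]) (p : {poly int})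
  (hd : (0 < d)%N)
  (hdeg : size p = d.+1)
  (hirr : irreducible_poly (map_poly (intr : int -> rat) p))
  (hroots : map_poly (intr : int -> R[i]) p
            = (lead_coef p)%:~R *: \prod_(j < d) ('X - (lam j)%:P))
  (hreal : lam 0%N \is Num.real)
  (hgt1 : 1 < lam 0%N)
  (hdom : forall j : nat, (0 < j < d)%N -> `|lam j| < lam 0%N)
  (hc : c 0%N != 0)
  (hpos : forall n : nat, exists k : nat, (0 < k)%N /\ lrs d c lam n = k%:R)
  (m : nat) (eps : 'I_m -> int) (idx : 'I_m -> nat)
  (heps : forall k : 'I_m, eps k = 1 \/ eps k = -1)
  (hsum : \sum_(k < m) (eps k)%:~R * lam 0%N ^+ idx k = 0) :
  \sum_(k < m) (eps k)%:~R * lrs d c lam (idx k) = 0.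
Proof.
set q := sparse_poly eps idx.
have qE (x : R[i]) : (map_poly intr q).[x] = \sum_(k < m) (eps k)%:~R * x ^+ idx k.
  exact: horner_map_sparse_poly.
have p_roots (j : 'I_d) : root (map_poly intr p) (lam j).
  by rewrite hroots root_scale_prod_XsubC.
have p_dvd_q : map_poly (intr : int -> rat) p %| map_poly intr q.
  apply: (@irredp_dvdp_common_root _ _ ratr _ _ (lam 0%N) hirr).
    by rewrite map_poly_rmorph_intr (p_roots (Ordinal hd)).
  by rewrite map_poly_rmorph_intr /root qE hsum.
have q_roots (j : 'I_d) : root (map_poly intr q) (lam j).
  rewrite -(dvdp_map (ratr : {rmorphism rat -> R[i]})) in p_dvd_q.
  rewrite !map_poly_rmorph_intr in p_dvd_q.
  exact: root_dvdp p_dvd_q (p_roots j).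
rewrite sum_lrs_exchange big1 // => j _.
by rewrite -qE (rootP (q_roots j)) mulr0.
Qed.
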